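(* Let $V$ be a vector space. For sentences $S=S_1|\cdots|S_n$ and $W=W_1|\cdots|W_k$ in $T(T(V)_+)$ with all $S_i,W_j\in T(V)_+$ and $n,k\ge1$: $S*W=\sum_{f}\big(S_1*W_{f^{-1}(\{1\})}\big)|\cdots|\big(S_n*W_{f^{-1}(\{n\})}\big)$, where the sum runs over all injective maps $f:\{1,\dots,k\}\hookrightarrow\{1,\dots,n\}$ (so the sum is $0$ if $k>n$).
   Context: $T(V)_+=\bigoplus_{n\ge1}V^{\otimes n}$ with $*$ the concatenation product of $T(V)$. $T(T(V)_+)$ is the tensor Hopf algebra on $T(V)_+$ (sentences), product $|$, elements of $T(V)_+$ primitive. For $I=\{i_1<\dots<i_l\}\subseteq\{1,\dots,k\}$, $W_I=W_{i_1}|\cdots|W_{i_l}$, and $W_\emptyset=1$. The product $*$ is extended to $T(T(V)_+)$ as the unique bilinear map with, for all $f,g,h\in T(T(V)_+)$ and $y\in T(V)_+$: $\varepsilon(f*g)=\varepsilon(f)\varepsilon(g)$; $\Delta(f*g)=\Delta(f)*\Delta(g)$; $f*1=f$; $1*f=\varepsilon(f)1$; $f*(g|y)=(f*g)*y-f*(g*y)$; $(f|g)*h=(f*h^{(1)})|(g*h^{(2)})$; $(f*g)*h=f*\big((g*h^{(1)})|h^{(2)}\big)$. *)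

From HB Require Import structures.
From mathcomp Require Import all_boot all_order all_algebra.
From mathcomp Require Import finmap.
From mathcomp Require Import monalg.

Set Implicit Arguments.
Unset Strict Implicit.
Unset Printing Implicit Defensive.

Import GRing.Theory.
Local Open Scope ring_scope.

Section TTV.
Variables (K : fieldType) (A : choiceType).
(* A is a basis of the vector space V = K^(A). *)

(* Nonempty words over A (basis of T(V)_+): head letter and tail. *)
Definition word := (A * seq A)%type.
Definition wcat (w w' : word) : word := (w.1, w.2 ++ w'.1 :: w'.2).

(* Sentences: words of words (basis of T(T(V)_+)). *)
Definition sent := seq word.

(* T(V)_+, T(T(V)_+) and T(T(V)_+) (x) T(T(V)_+) as free K-modules. *)
Definition TVp := {malg K[word]}.
Definition TTV := {malg K[sent]}.
Definition TTV2 := {malg K[(sent * sent)%type]}.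

Definition lin (X : choiceType) (M : lmodType K) (F : X -> M)
  (g : {malg K[X]}) : M := \sum_(k <- msupp g) g@_k *: F k.

Definition bilin (X Y : choiceType) (M : lmodType K) (F : X -> Y -> M)
  (g : {malg K[X]}) (h : {malg K[Y]}) : M :=
  lin (fun x => lin (F x) h) g.

Definition conc : TVp -> TVp -> TVp := bilin (fun w w' => << wcat w w' >>).

Definition incl : TVp -> TTV := lin (fun w => << [:: w] : sent >>).

Definition tone : TTV := << [::] : sent >>.
Definition eps (f : TTV) : K := f@_([::] : sent).
Definition bar : TTV -> TTV -> TTV := bilin (fun s t => << s ++ t >>).
Definition Delta : TTV -> TTV2 :=
  lin (fun s : sent => \sum_(m : (size s).-tuple bool)
         << (mask m s, mask (map negb m) s) >>).

Definition tens (f g : TTV) : TTV2 := bilin (fun s t => << (s, t) >>) f g.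

Definition star2 (star : TTV -> TTV -> TTV) : TTV2 -> TTV2 -> TTV2 :=
  bilin (fun p q => tens (star << p.1 >> << q.1 >>) (star << p.2 >> << q.2 >>)).

Definition sentence (k : nat) (W : 'I_k -> TVp) (I : seq 'I_k) : TTV :=
  foldr (fun j acc => bar (incl (W j)) acc) tone I.

Definition is_ext_star (star : TTV -> TTV -> TTV) : Prop :=
  (forall (a : K) f g h, star (a *: f + g) h = a *: star f h + star g h) /\
  (forall (a : K) f g h, star f (a *: g + h) = a *: star f g + star f h) /\
  (forall x y : TVp, star (incl x) (incl y) = incl (conc x y)) /\
  (forall f g, eps (star f g) = eps f * eps g) /\
  (forall f g, Delta (star f g) = star2 star (Delta f) (Delta g)) /\
  (forall f, star f tone = f) /\
  (forall f, star tone f = eps f *: tone) /\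
  (forall f g (y : TVp),
     star f (bar g (incl y)) = star (star f g) (incl y) - star f (star g (incl y))) /\
  (forall f g h,
     star (bar f g) h =
     lin (fun p : sent * sent => bar (star f << p.1 >>) (star g << p.2 >>)) (Delta h)) /\
  (forall f g h,
     star (star f g) h =
     star f (lin (fun p : sent * sent => bar (star g << p.1 >>) << p.2 >>) (Delta h))).

End TTV.

From HB Require Import structures.
From mathcomp Require Import all_boot all_order all_algebra.
From mathcomp Require Import finmap.
From mathcomp Require Import monalg.

Set Implicit Arguments.
Unset Strict Implicit.
Unset Printing Implicit Defensive.

Import GRing.Theory.
Local Open Scope ring_scope.

(* Writing S = S_1 | S', the rule (f|g)*h = (f*h')|(g*h'') with the deshuffle
   coproduct of W_J expresses S*W_J as the sum, over the subsets J_1 of J, of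
   (S_1*W_J_1) | (S'*W_(J-J_1)); so by induction on n, S*W is the sum over all maps f : {1..k} -> {1..n} of
   (S_1*W_f^-1(1)) | ... | (S_n*W_f^-1(n)).  A term with a fibre of size at least 2
   vanishes, because x*(w_1|...|w_p) = 0 for x in T(V)_+ and p >= 2: this follows by
   induction on p from f*(g|y) = (f*g)*y - f*(g*y), the base case p = 2 being the
   associativity of concatenation. *)

Section LinearFun.
Variables (K : fieldType) (U V : lmodType K) (L : U -> V).
Hypothesis L_lin : linear L.

Lemma linear_fun0 : L 0 = 0.
Proof. by rewrite -(subrr 0) (zmod_morphism_linear L_lin) subrr. Qed.

Lemma linear_funD u v : L (u + v) = L u + L v.
Proof. by have := L_lin 1 u v; rewrite !scale1r. Qed.

Lemma linear_funZ a u : L (a *: u) = a *: L u.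
Proof. exact: scalable_linear L_lin a u. Qed.

Lemma linear_fun_sum (I : Type) (r : seq I) (P : pred I) (F : I -> U) :
  L (\sum_(i <- r | P i) F i) = \sum_(i <- r | P i) L (F i).
Proof. exact: (big_morph L linear_funD linear_fun0). Qed.

End LinearFun.

Section LinearFunClosure.
Variables (K : fieldType) (U V W : lmodType K).

Lemma linear_comp (f : U -> V) (g : V -> W) :
  linear f -> linear g -> linear (fun u => g (f u)).
Proof. by move=> f_lin g_lin a u v; rewrite f_lin g_lin. Qed.

Lemma linear_addf (f g : U -> V) :
  linear f -> linear g -> linear (fun u => f u + g u).
Proof.
move=> f_lin g_lin a u v; rewrite f_lin g_lin scalerDr.
by rewrite -!addrA; congr (_ + _); rewrite addrCA.
Qed.

Lemma linear_sumf (I : Type) (r : seq I) (F : I -> U -> V) :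
  (forall i, linear (F i)) -> linear (fun u => \sum_(i <- r) F i u).
Proof.
move=> F_lin a u v; rewrite scaler_sumr -big_split; apply: eq_bigr => i _; exact: F_lin.
Qed.

End LinearFunClosure.

Section FreeModule.
Variables (K : fieldType) (X : choiceType) (M : lmodType K).
Implicit Types (F G : X -> M) (g : {malg K[X]}).

Lemma linEw F g (d : {fset X}) : (msupp g `<=` d)%fset ->
  lin F g = \sum_(x <- d) g@_x *: F x.
Proof.
move=> le_gd; rewrite /lin [LHS](big_fset_incl _ le_gd) => //= x _ /mcoeff_outdom ->.
by rewrite scale0r.
Qed.

Lemma lin_linear F : linear (lin F).
Proof.
move=> a g h; set d := (msupp g `|` msupp h `|` msupp (a *: g + h))%fset.
rewrite !(@linEw F _ d); last 3 first.
- by apply/fsubsetP=> x; rewrite !inE => ->; rewrite !orbT.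
- by apply/fsubsetP=> x; rewrite !inE => ->.
- by apply/fsubsetP=> x; rewrite !inE => ->; rewrite ?orbT.
rewrite scaler_sumr -big_split /=; apply: eq_bigr => x _.
by rewrite mcoeffD mcoeffZ scalerDl scalerA.
Qed.

Lemma linU F x : lin F << x >> = F x.
Proof.
by rewrite (@linEw F _ [fset x]%fset) ?msuppU_le // big_seq_fset1 mcoeffUU scale1r.
Qed.

Lemma eq_lin F G : F =1 G -> lin F =1 lin G.
Proof. by move=> eFG g; apply: eq_bigr => x _; rewrite eFG. Qed.

Lemma lin_funDZ F G a g : lin (fun x => a *: F x + G x) g = a *: lin F g + lin G g.
Proof.
rewrite /lin scaler_sumr -big_split; apply: eq_bigr => x _.
by rewrite scalerDr !scalerA mulrC.
Qed.

Lemma linear_linE (L : {malg K[X]} -> M) :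
  linear L -> forall g, L g = lin (fun x => L << x >>) g.
Proof.
move=> L_lin g; rewrite {1}(monalgE g) (linear_fun_sum L_lin); apply: eq_bigr => x _.
have -> : << g@_x *g x >> = g@_x *: << x >> :> {malg K[X]}.
  by apply/malgP => y; rewrite mcoeffZ !mcoeffU mulr_natr.
by rewrite (linear_funZ L_lin).
Qed.

Lemma linear_malg_ext (L1 L2 : {malg K[X]} -> M) : linear L1 -> linear L2 ->
  (forall x, L1 << x >> = L2 << x >>) -> L1 =1 L2.
Proof.
by move=> L1_lin L2_lin eL g; rewrite (linear_linE L1_lin) (linear_linE L2_lin); apply: eq_lin.
Qed.

End FreeModule.

Section Bilinear.
Variables (K : fieldType) (X Y : choiceType) (M : lmodType K).
Variable F : X -> Y -> M.

Lemma bilin_linearl h : linear (fun g => bilin F g h).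
Proof. exact: lin_linear. Qed.

Lemma bilin_linearr g : linear (bilin F g).
Proof. by move=> a h h'; rewrite /bilin -lin_funDZ; apply: eq_lin => x; apply: lin_linear. Qed.

Lemma bilinUU x y : bilin F << x >> << y >> = F x y.
Proof. by rewrite /bilin !linU. Qed.

Lemma bilinU x h : bilin F << x >> h = lin (F x) h.
Proof. by rewrite /bilin linU. Qed.

End Bilinear.

Lemma bilinear_malg_ext (K : fieldType) (X Y : choiceType) (M : lmodType K)
    (B1 B2 : {malg K[X]} -> {malg K[Y]} -> M) :
  (forall h, linear (fun g => B1 g h)) -> (forall g, linear (B1 g)) ->
  (forall h, linear (fun g => B2 g h)) -> (forall g, linear (B2 g)) ->
  (forall x y, B1 << x >> << y >> = B2 << x >> << y >>) -> forall g h, B1 g h = B2 g h.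
Proof.
move=> B1l B1r B2l B2r eB g h.
by apply: (@linear_malg_ext _ _ _ (B1^~ h) (B2^~ h)) => // x; apply: linear_malg_ext.
Qed.

Lemma mcoeff_lin_eq0 (K : fieldType) (X Y : choiceType) (F : X -> {malg K[Y]})
    (g : {malg K[X]}) y :
  (forall x, (F x)@_y = 0) -> (lin F g)@_y = 0.
Proof. by move=> Fy0; rewrite /lin raddf_sum big1 // => x _ /=; rewrite mcoeffZ Fy0 mulr0. Qed.

Section BoolTuples.
Variable M : zmodType.

Lemma sum_tuple_bool0 (F : 0.-tuple bool -> M) : \sum_(m : 0.-tuple bool) F m = F [tuple].
Proof. by rewrite (big_pred1 [tuple]) // => m; apply/esym/eqP/tuple0. Qed.

Lemma sum_tuple_boolS n (F : n.+1.-tuple bool -> M) :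
  \sum_(m : n.+1.-tuple bool) F m =
  \sum_(m : n.-tuple bool) (F [tuple of true :: m] + F [tuple of false :: m]).
Proof.
rewrite (reindex (fun p : bool * n.-tuple bool => [tuple of p.1 :: p.2])) /=; last first.
  exists (fun m : n.+1.-tuple bool => (thead m, [tuple of behead m])).
    by case=> b m _; congr (_, _); apply: val_inj.
  by move=> m _; apply: val_inj => /=; case: m => [[|b s]].
rewrite -(pair_big xpredT xpredT (fun b (m : n.-tuple bool) => F [tuple of b :: m])) /=.
by rewrite big_bool /= big_split /= addrC.
Qed.

Lemma sum_tuple_bool_size n1 n2 (F : seq bool -> M) : n1 = n2 ->
  \sum_(m : n1.-tuple bool) F m = \sum_(m : n2.-tuple bool) F m.
Proof. by move=> <-. Qed.

End BoolTuples.

Section Masks.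
Variables (T : eqType) (s : seq T) (m : seq bool).
Hypotheses (s_uniq : uniq s) (size_m : size m = size s).

Lemma map_mem_mask : map (fun x => x \in mask m s) s = m.
Proof.
elim: s m s_uniq size_m => [|y s' IH] [|b m'] //= /andP[ys' us'] [sm'].
rewrite mem_mask_cons eqxx andbT.
have -> : (y \in mask m' s') = false by apply/negbTE; apply: contra ys'; apply: mem_mask.
rewrite orbF; congr (_ :: _); rewrite -[RHS](IH m' us' sm'); apply/eq_in_map => x xs'.
by rewrite mem_mask_cons; case: eqP => [exy|]; [move: ys'; rewrite -exy xs' | rewrite andbF].
Qed.

Lemma mask_negbE : mask (map negb m) s = [seq x <- s | x \notin mask m s].
Proof. by rewrite filter_mask -[in LHS]map_mem_mask -map_comp. Qed.

Lemma mem_mask_negb x : (x \in mask (map negb m) s) = (x \in s) && (x \notin mask m s).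
Proof. by rewrite mask_negbE mem_filter andbC. Qed.

End Masks.

Section Sentences.
Variables (K : fieldType) (A : choiceType).
Local Notation TVp := (TVp K A).
Local Notation TTV := (TTV K A).
Local Notation TTV2 := (TTV2 K A).
Local Notation tone := (tone K A).

Lemma bar_linearl (h : TTV) : linear (fun g : TTV => bar g h).
Proof. exact: bilin_linearl. Qed.
Lemma bar_linearr (g : TTV) : linear (bar g).
Proof. exact: bilin_linearr. Qed.
Lemma barUU (s t : sent A) : bar << s >> << t >> = << s ++ t >> :> TTV.
Proof. exact: bilinUU. Qed.
Lemma tens_linearl (h : TTV) : linear (fun g : TTV => tens g h).
Proof. exact: bilin_linearl. Qed.
Lemma tens_linearr (g : TTV) : linear (tens g).
Proof. exact: bilin_linearr. Qed.
Lemma tensUU (s t : sent A) : tens << s >> << t >> = << (s, t) >> :> TTV2.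
Proof. exact: bilinUU. Qed.
Lemma conc_linearl (h : TVp) : linear (fun g : TVp => conc g h).
Proof. exact: bilin_linearl. Qed.
Lemma conc_linearr (g : TVp) : linear (conc g).
Proof. exact: bilin_linearr. Qed.
Lemma incl_linear : linear (@incl K A).
Proof. exact: lin_linear. Qed.
Lemma Delta_linear : linear (@Delta K A).
Proof. exact: lin_linear. Qed.
Lemma inclU (w : word A) : incl << w >> = << [:: w] >> :> TTV.
Proof. exact: linU. Qed.

Lemma barA (f g h : TTV) : bar (bar f g) h = bar f (bar g h).
Proof.
move: f; apply: linear_malg_ext.
- exact: linear_comp (bar_linearl g) (bar_linearl h).
- exact: bar_linearl.
move=> s; move: g; apply: linear_malg_ext.
- exact: linear_comp (bar_linearr _) (bar_linearl h).
- exact: linear_comp (bar_linearl h) (bar_linearr _).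
move=> t; move: h; apply: linear_malg_ext.
- exact: bar_linearr.
- exact: linear_comp (bar_linearr _) (bar_linearr _).
by move=> u; rewrite !barUU catA.
Qed.

Lemma bar_tonel (f : TTV) : bar tone f = f.
Proof. by move: f; apply: linear_malg_ext => [||s]; rewrite ?barUU //; apply: bar_linearr. Qed.

Lemma bar_toner (f : TTV) : bar f tone = f.
Proof. by move: f; apply: linear_malg_ext => [||s]; rewrite ?barUU ?cats0 //; apply: bar_linearl. Qed.

Lemma concA (f g h : TVp) : conc (conc f g) h = conc f (conc g h).
Proof.
move: f; apply: linear_malg_ext.
- exact: linear_comp (conc_linearl g) (conc_linearl h).
- exact: conc_linearl.
move=> w; move: g; apply: linear_malg_ext.
- exact: linear_comp (conc_linearr _) (conc_linearl h).
- exact: linear_comp (conc_linearl h) (conc_linearr _).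
move=> w'; move: h; apply: linear_malg_ext.
- exact: conc_linearr.
- exact: linear_comp (conc_linearr _) (conc_linearr _).
by move=> w''; rewrite /conc !bilinUU /wcat /= -catA.
Qed.

Lemma eps_tone : eps tone = 1.
Proof. exact: mcoeffUU. Qed.

Lemma eps_bar_incl (w : TVp) (f : TTV) : eps (bar (incl w) f) = 0.
Proof.
rewrite /eps (linear_linE (linear_comp incl_linear (bar_linearl f))).
apply: mcoeff_lin_eq0 => a; rewrite inclU /bar bilinU.
by apply: mcoeff_lin_eq0 => t; rewrite mcoeffU.
Qed.

Lemma eps_incl (y : TVp) : eps (incl y) = 0.
Proof. by rewrite -[incl y]bar_toner eps_bar_incl. Qed.

Lemma lin_tens (M : lmodType K) (H : TTV -> TTV -> M) (G : sent A * sent A -> M) f g :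
  (forall s t, G (s, t) = H << s >> << t >>) ->
  (forall h, linear (fun g => H g h)) -> (forall g, linear (H g)) ->
  lin G (tens f g) = H f g.
Proof.
move=> eGH Hl Hr; move: f g.
apply: (@bilinear_malg_ext _ _ _ _ (fun f g => lin G (tens f g))) => // [h|g|s t].
- exact: linear_comp (tens_linearl h) (lin_linear _).
- exact: linear_comp (tens_linearr g) (lin_linear _).
by rewrite tensUU linU.
Qed.

Definition sentence_of (ws : seq TVp) : TTV := foldr (fun w acc => bar (incl w) acc) tone ws.

Lemma sentenceE m (V : 'I_m -> TVp) J : sentence V J = sentence_of (map V J).
Proof. by rewrite /sentence /sentence_of foldr_map. Qed.

Lemma Delta_bar_incl (w : TVp) (g : TTV) :
  Delta (bar (incl w) g) =
  lin (fun p : sent A * sent A => tens (bar (incl w) << p.1 >>) << p.2 >> +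
                                  tens << p.1 >> (bar (incl w) << p.2 >>)) (Delta g).
Proof.
move: g; apply: linear_malg_ext.
- exact: linear_comp (bar_linearr _) Delta_linear.
- exact: linear_comp Delta_linear (lin_linear _).
move=> t; rewrite [Delta << t >>]linU.
transitivity (\sum_(m : (size t).-tuple bool)
   (tens (bar (incl w) << mask m t >>) << mask (map negb m) t >> +
    tens << mask m t >> (bar (incl w) << mask (map negb m) t >>))); last first.
  by rewrite (linear_fun_sum (lin_linear _)); apply: eq_bigr => m _; rewrite linU.
move: w; apply: linear_malg_ext.
- exact: linear_comp incl_linear (linear_comp (bar_linearl _) Delta_linear).
- apply: linear_sumf => m; apply: linear_addf.
    exact: linear_comp incl_linear (linear_comp (bar_linearl _) (tens_linearl _)).
  exact: linear_comp incl_linear (linear_comp (bar_linearl _) (tens_linearr _)).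
move=> a; rewrite inclU barUU /Delta linU /= sum_tuple_boolS.
by apply: eq_bigr => m _; rewrite /= !barUU !tensUU.
Qed.

Lemma Delta_sentence_of (ws : seq TVp) :
  Delta (sentence_of ws) = \sum_(m : (size ws).-tuple bool)
     tens (sentence_of (mask m ws)) (sentence_of (mask (map negb m) ws)).
Proof.
elim: ws => [|w ws IH]; first by rewrite sum_tuple_bool0 /= /Delta linU sum_tuple_bool0 /= tensUU.
rewrite /= Delta_bar_incl IH (linear_fun_sum (lin_linear _)) sum_tuple_boolS.
apply: eq_bigr => m _.
rewrite (@lin_tens _ (fun a b => tens (bar (incl w) a) b + tens a (bar (incl w) b))) // => [h|g].
- exact: linear_addf (linear_comp (bar_linearr _) (tens_linearl _)) (tens_linearl _).
- exact: linear_addf (tens_linearr _) (linear_comp (bar_linearr _) (tens_linearr _)).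
Qed.

Lemma Delta_incl (y : TVp) : Delta (incl y) = tens (incl y) tone + tens tone (incl y).
Proof. by have := Delta_sentence_of [:: y]; rewrite /= sum_tuple_boolS sum_tuple_bool0 /= !bar_toner. Qed.

Lemma sentence_of_rcons (ws : seq TVp) y :
  sentence_of (rcons ws y) = bar (sentence_of ws) (incl y).
Proof.
elim: ws => [|w ws IH] /=; first by rewrite bar_toner bar_tonel.
by rewrite IH -barA.
Qed.

Lemma eps_sentence_of (ws : seq TVp) : eps (sentence_of ws) = if ws is [::] then 1 else 0.
Proof. by case: ws => [|w ws]; rewrite /= ?eps_tone ?eps_bar_incl. Qed.

End Sentences.

Section StarProduct.
Variables (K : fieldType) (A : choiceType).
Local Notation TVp := (TVp K A).
Local Notation TTV := (TTV K A).
Local Notation tone := (tone K A).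
Local Notation sentence_of := (@sentence_of K A).
Variable star : TTV -> TTV -> TTV.
Hypothesis star_ext : is_ext_star star.

Lemma star_linearl h : linear (fun f => star f h).
Proof. by case: star_ext => H _ a f g; rewrite H. Qed.
Lemma star_linearr f : linear (star f).
Proof. by case: star_ext => _ [H _] a g h; rewrite H. Qed.
Lemma star_incl x y : star (incl x) (incl y) = incl (conc x y).
Proof. by case: star_ext => _ [_ [H _]]. Qed.
Lemma star_toner f : star f tone = f.
Proof. by case: star_ext => _ [_ [_ [_ [_ [H _]]]]]. Qed.
Lemma star_tonel f : star tone f = eps f *: tone.
Proof. by case: star_ext => _ [_ [_ [_ [_ [_ [H _]]]]]]. Qed.
Lemma star_bar_inclr f g y :
  star f (bar g (incl y)) = star (star f g) (incl y) - star f (star g (incl y)).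
Proof. by case: star_ext => _ [_ [_ [_ [_ [_ [_ [H _]]]]]]]. Qed.
Lemma star_barl f g h :
  star (bar f g) h =
  lin (fun p : sent A * sent A => bar (star f << p.1 >>) (star g << p.2 >>)) (Delta h).
Proof. by case: star_ext => _ [_ [_ [_ [_ [_ [_ [_ [H _]]]]]]]]. Qed.

Lemma star_barl_tens f g h h' :
  lin (fun p : sent A * sent A => bar (star f << p.1 >>) (star g << p.2 >>)) (tens h h') =
  bar (star f h) (star g h').
Proof.
apply: (@lin_tens _ _ _ (fun a b => bar (star f a) (star g b))) => // [b|a].
- exact: linear_comp (star_linearr f) (bar_linearl _).
- exact: linear_comp (star_linearr g) (bar_linearr _).
Qed.

Lemma star_sentence_of_cons x xs ws :
  star (sentence_of (x :: xs)) (sentence_of ws) =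
  \sum_(m : (size ws).-tuple bool)
     bar (star (incl x) (sentence_of (mask m ws)))
         (star (sentence_of xs) (sentence_of (mask (map negb m) ws))).
Proof.
rewrite star_barl Delta_sentence_of (linear_fun_sum (lin_linear _)).
by apply: eq_bigr => m _; rewrite star_barl_tens.
Qed.

Lemma star_sentence_of_incl w ws y :
  star (sentence_of (w :: ws)) (incl y) =
  bar (incl (conc w y)) (sentence_of ws) + bar (incl w) (star (sentence_of ws) (incl y)).
Proof.
rewrite star_barl Delta_incl (linear_funD (lin_linear _)).
apply: etrans (congr2 +%R (star_barl_tens _ _ _ _) (star_barl_tens _ _ _ _)) _.
by rewrite star_incl !star_toner.
Qed.

Lemma star_sentence_of_incl_sum ws y : ws != [::] ->
  exists2 r : seq (seq TVp), all (fun u => size u == size ws) r &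
    star (sentence_of ws) (incl y) = \sum_(u <- r) sentence_of u.
Proof.
elim: ws => [|w ws IH] // _; case: ws IH => [|w' ws] IH.
  exists [:: [:: conc w y]] => //.
  rewrite star_sentence_of_incl big_seq1 /= star_tonel eps_incl scale0r.
  by rewrite (linear_fun0 (bar_linearr _)) addr0.
have [r size_r e_r] := IH isT.
exists ((conc w y :: w' :: ws) :: map (cons w) r).
  by rewrite /= eqxx all_map; apply/allP => u ur /=; apply: (allP size_r).
rewrite star_sentence_of_incl e_r big_cons big_map; congr (_ + _).
by rewrite (linear_fun_sum (bar_linearr _)).
Qed.

Lemma star_incl_sentence_of_eq0 x ws : (1 < size ws)%N -> star (incl x) (sentence_of ws) = 0.
Proof.
have [N] := ubnP (size ws); elim: N ws => // N IH ws.
case/lastP: ws => [|ws y] //; rewrite size_rcons => size_ws size_gt1.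
rewrite sentence_of_rcons star_bar_inclr.
case: ws size_ws size_gt1 => [|z [|z' ws]] // size_ws _.
  by rewrite /= !bar_toner !star_incl concA subrr.
have [r size_r ->] := @star_sentence_of_incl_sum [:: z, z' & ws] y isT.
rewrite IH // (linear_fun0 (star_linearl _)) (linear_fun_sum (star_linearr _)).
rewrite big_seq big1 ?subrr // => u /(allP size_r)/eqP size_u.
by apply: IH; rewrite size_u.
Qed.

End StarProduct.

Section Fibres.
Variables (K : fieldType) (A : choiceType).
Local Notation TVp := (TVp K A).
Local Notation TTV := (TTV K A).
Local Notation tone := (tone K A).
Variable star : TTV -> TTV -> TTV.
Hypothesis star_ext : is_ext_star star.
Variables (n k : nat) (S : 'I_n -> TVp) (W : 'I_k -> TVp) (i0 : 'I_n).
Local Notation ffun_kn := {ffun 'I_k -> 'I_n}.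

Definition fibre_term (I : seq 'I_n) (J : seq 'I_k) (f : ffun_kn) : TTV :=
  foldr (fun i acc => bar (star (incl (S i)) (sentence W [seq j <- J | f j == i])) acc) tone I.

(* Maps from J to I, represented by the ffuns that are constantly i0 off J. *)
Definition maps_to (J : seq 'I_k) (I : seq 'I_n) (f : ffun_kn) : bool :=
  [forall j, if j \in J then f j \in I else f j == i0].

Definition fibre_mask (i : 'I_n) (J : seq 'I_k) (f : ffun_kn) : (size J).-tuple bool :=
  map_tuple (fun j => f j == i) (in_tuple J).

Lemma fibre_term_cons i I J (f : ffun_kn) :
  fibre_term (i :: I) J f =
  bar (star (incl (S i)) (sentence W [seq j <- J | f j == i])) (fibre_term I J f).
Proof. by []. Qed.

Lemma eq_fibre_term I J1 J2 (f1 f2 : ffun_kn) :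
  {in I, forall i, [seq j <- J1 | f1 j == i] = [seq j <- J2 | f2 j == i]} ->
  fibre_term I J1 f1 = fibre_term I J2 f2.
Proof.
elim: I => [|i I IH] eJ; first by [].
rewrite !fibre_term_cons (eJ i (mem_head i I)) IH // => i' i'I.
by apply: eJ; rewrite in_cons i'I orbT.
Qed.

Lemma fibre_term_eq0 I J (f : ffun_kn) i : i \in I ->
  (1 < size [seq j <- J | f j == i])%N -> fibre_term I J f = 0.
Proof.
move=> iI fibre_gt1.
have S_fibre0 : star (incl (S i)) (sentence W [seq j <- J | f j == i]) = 0.
  by rewrite sentenceE star_incl_sentence_of_eq0 // size_map.
elim: I iI => [|i' I IH] //; rewrite in_cons fibre_term_cons => /orP[/eqP <-|iI].
  by rewrite S_fibre0 (linear_fun0 (bar_linearl _)).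
by rewrite IH // (linear_fun0 (bar_linearr _)).
Qed.

Section ConsStep.
Variables (i : 'I_n) (I : seq 'I_n) (J : seq 'I_k) (m : (size J).-tuple bool).
Hypotheses (iI : i \notin I) (J_uniq : uniq J).
Local Notation Jm := (mask m J).
Local Notation Jc := (mask (map negb m) J).

(* The maps J -> i :: I with fibre Jm over i correspond to the maps Jc -> I. *)

Definition extend_fun (f : ffun_kn) : ffun_kn := [ffun j => if j \in Jm then i else f j].
Definition restrict_fun (f : ffun_kn) : ffun_kn := [ffun j => if f j == i then i0 else f j].

Lemma filter_fibre (f : ffun_kn) : fibre_mask i J f = m -> [seq j <- J | f j == i] = Jm.
Proof. by move=> <-; rewrite filter_mask. Qed.

Lemma filter_fibreN (f : ffun_kn) : fibre_mask i J f = m -> [seq j <- J | f j != i] = Jc.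
Proof. by move=> <-; rewrite filter_mask -map_comp. Qed.

Let mem_Jc := mem_mask_negb J_uniq (size_tuple m).
Let neq_i i' (i'I : i' \in I) : (i' == i) = false := negbTE (memPn iI i' i'I).

Lemma maps_to_extend f : maps_to Jc I f -> maps_to J (i :: I) (extend_fun f).
Proof.
move=> /forallP f_to; apply/forallP => j; rewrite ffunE.
have := f_to j; rewrite mem_Jc.
case jJm: (j \in Jm); first by rewrite (mem_mask jJm) mem_head.
by rewrite andbT; case: (j \in J) => //= fjI; rewrite in_cons fjI orbT.
Qed.

Lemma fibre_mask_extend f : maps_to Jc I f -> fibre_mask i J (extend_fun f) = m.
Proof.
move=> /forallP f_to; apply: val_inj => /=.
rewrite -[RHS](map_mem_mask J_uniq (size_tuple m)); apply/eq_in_map => j jJ.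
rewrite ffunE; case: ifP => [_|jJm]; first exact: eqxx.
by have := f_to j; rewrite mem_Jc jJ jJm /= => /neq_i.
Qed.

Lemma restrict_extend f : maps_to Jc I f -> restrict_fun (extend_fun f) = f.
Proof.
move=> /forallP f_to; apply/ffunP => j; rewrite !ffunE.
have := f_to j; rewrite mem_Jc.
case: (j \in Jm); rewrite /= ?andbF ?andbT; first by move/eqP ->; rewrite eqxx.
by case: (j \in J) => [/neq_i -> | /eqP ->]; rewrite ?if_same.
Qed.

Lemma extend_restrict f : maps_to J (i :: I) f -> fibre_mask i J f = m ->
  extend_fun (restrict_fun f) = f.
Proof.
move=> /forallP f_to /filter_fibre fibre_f; apply/ffunP => j.
rewrite !ffunE -fibre_f mem_filter.
have [fj /=|//] := eqVneq (f j) i; have := f_to j.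
by case: (j \in J) => [_|/eqP ->] //; rewrite fj.
Qed.

Lemma maps_to_restrict f : maps_to J (i :: I) f -> fibre_mask i J f = m ->
  maps_to Jc I (restrict_fun f).
Proof.
move=> /forallP f_to /filter_fibreN fibreN_f; apply/forallP => j.
rewrite ffunE -fibreN_f mem_filter.
have := f_to j; have [fj _|fj] := eqVneq (f j) i; first by rewrite /= eqxx.
by case: (j \in J) => //=; rewrite in_cons (negbTE fj).
Qed.

Lemma fibre_term_extend f : maps_to Jc I f ->
  fibre_term (i :: I) J (extend_fun f) =
  bar (star (incl (S i)) (sentence W Jm)) (fibre_term I Jc f).
Proof.
move=> f_to; rewrite fibre_term_cons (filter_fibre (fibre_mask_extend f_to)); congr bar.
apply: eq_fibre_term => i' i'I.
rewrite (mask_negbE J_uniq (size_tuple m)) -filter_predI.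
apply: eq_filter => j /=; rewrite ffunE; case: (j \in Jm).
  by rewrite andbF eq_sym neq_i.
by rewrite andbT.
Qed.

Lemma sum_fibre_cons :
  \sum_(f | maps_to J (i :: I) f && (fibre_mask i J f == m)) fibre_term (i :: I) J f =
  bar (star (incl (S i)) (sentence W Jm)) (\sum_(f | maps_to Jc I f) fibre_term I Jc f).
Proof.
rewrite [RHS](linear_fun_sum (bar_linearr _)) [LHS](reindex_onto extend_fun restrict_fun); last first.
  by move=> f /andP[f_to /eqP fibre_f]; apply: extend_restrict.
apply: eq_big => f.
  apply/idP/idP => [/andP[/andP[f_to /eqP fibre_f] /eqP ref]|f_to].
    by rewrite -ref; apply: maps_to_restrict f_to fibre_f.
  by rewrite maps_to_extend ?fibre_mask_extend ?restrict_extend ?eqxx.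
move=> /andP[/andP[f_to /eqP fibre_f] /eqP ref].
rewrite fibre_term_extend // -ref.
exact: maps_to_restrict f_to fibre_f.
Qed.

End ConsStep.

Lemma star_sentence_cons i I J :
  star (sentence S (i :: I)) (sentence W J) =
  \sum_(m : (size J).-tuple bool)
    bar (star (incl (S i)) (sentence W (mask m J)))
        (star (sentence S I) (sentence W (mask (map negb m) J))).
Proof.
rewrite !sentenceE (star_sentence_of_cons star_ext).
apply: etrans (sum_tuple_bool_size (fun m =>
  bar (star (incl (S i)) (sentence_of (mask m (map W J))))
      (star (sentence_of (map S I)) (sentence_of (mask (map negb m) (map W J))))) (size_map W J)) _.
by apply: eq_bigr => m _; rewrite -!map_mask -!sentenceE.
Qed.

Lemma star_sentences I J : uniq I -> uniq J ->
  star (sentence S I) (sentence W J) = \sum_(f | maps_to J I f) fibre_term I J f.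
Proof.
elim: I J => [|i I IH] J; last first.
  rewrite cons_uniq => /andP[iI I_uniq] J_uniq.
  rewrite star_sentence_cons [RHS](partition_big (fibre_mask i J) xpredT) //.
  by apply: eq_bigr => m _; rewrite IH ?mask_uniq // sum_fibre_cons.
move=> _ _; rewrite (star_tonel star_ext) sentenceE eps_sentence_of.
case: J => [|j J] /=; rewrite ?scale1r ?scale0r.
  rewrite (big_pred1 [ffun => i0]) // => f; apply/forallP/eqP => [f_to|-> j].
    by apply/ffunP => j; rewrite ffunE; apply/eqP/f_to.
  by rewrite ffunE.
rewrite big_pred0 // => f; apply/negbTE/forallP => /(_ j).
by rewrite mem_head in_nil.
Qed.

Lemma fibre_term_noninjective (f : ffun_kn) :
  ~~ injectiveb f -> fibre_term (enum 'I_n) (enum 'I_k) f = 0.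
Proof.
move=> f_noninj.
have /existsP[[j1 j2] /andP[/= j12 /eqP f12]] :
    [exists p : 'I_k * 'I_k, (p.1 != p.2) && (f p.1 == f p.2)].
  apply: contraR f_noninj => /existsPn f_inj; apply/injectiveP => j1 j2 f12.
  by apply/eqP; have := f_inj (j1, j2); rewrite /= f12 eqxx andbT negbK.
apply: (@fibre_term_eq0 _ _ _ (f j1)); first by rewrite mem_enum.
apply: (@leq_trans (size [:: j1; j2])) => //; apply: uniq_leq_size; first by rewrite /= inE j12.
by move=> j; rewrite !inE mem_filter mem_enum andbT => /orP[] /eqP ->; rewrite ?f12.
Qed.

End Fibres.

Theorem proposition4p7 (K : fieldType) (A : choiceType)
    (star : TTV K A -> TTV K A -> TTV K A) (Hstar : is_ext_star star)
    (n k : nat) (Hn : (0 < n)%N) (Hk : (0 < k)%N)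
    (S : 'I_n -> TVp K A) (W : 'I_k -> TVp K A) :
  star (sentence S (enum 'I_n)) (sentence W (enum 'I_k)) =
  \sum_(f : {ffun 'I_k -> 'I_n} | injectiveb f)
    foldr (fun i acc => bar (star (incl (S i)) (sentence W [seq j <- enum 'I_k | f j == i])) acc)
          (tone K A) (enum 'I_n).
Proof.
rewrite (star_sentences Hstar S W (Ordinal Hn) (enum_uniq _) (enum_uniq _)).
rewrite [LHS]big_mkcond [RHS]big_mkcond; apply: eq_bigr => f _.
have -> : maps_to (Ordinal Hn) (enum 'I_k) (enum 'I_n) f.
  by apply/forallP => j; rewrite !mem_enum.
by case: (boolP (injectiveb f)) => [//|/fibre_term_noninjective ->].
Qed.
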